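(* For every multigraph $G$ and every family $\mathcal{F}$ of multigraphs, $\mathrm{wsat}(G,\mathcal{F})\geq\mathrm{rk}\text{-}\mathrm{sat}(G,\mathcal{F})$.
   Context: A multigraph on vertex set $V$ has as edge set a multiset of pairs from $\binom{V}{2}$; different instances of the same pair are treated as distinct elements. For a multigraph $G$ and a family $\mathcal{F}$ of multigraphs, a spanning submultigraph $H$ of $G$ is weakly $\mathcal{F}$-saturated in $G$ if $G$ can be obtained from $H$ by adding the missing edge instances one at a time so that each added edge instance belongs to a copy (in the current multigraph) of some $F\in\mathcal{F}$. $\mathrm{wsat}(G,\mathcal{F})$ is the minimum number of edges (counted with multiplicity) of a weakly $\mathcal{F}$-saturated submultigraph of $G$. A matroid $M$ on the ground set $E(G)$ (edge instances) is weakly $\mathcal{F}$-saturated if for every $F\in\mathcal{F}$, every copy $\tilde F$ of $F$ in $G$ is a cycle of $M$, i.e. $\mathrm{rk}_M(E(\tilde F)\setminus\{e\})=\mathrm{rk}_M(E(\tilde F))$ for all $e\in E(\tilde F)$. $\mathrm{rk}\text{-}\mathrm{sat}(G,\mathcal{F})$ is the maximum rank of a weakly $\mathcal{F}$-saturated matroid on $E(G)$. *)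

From mathcomp Require Import all_boot.
From Stdlib Require Import ClassicalEpsilon.
Set Implicit Arguments.
Unset Strict Implicit.
Unset Printing Implicit Defensive.

(* Parallel edge instances are
   distinct elements of [me]. *)
Record multigraph := Multigraph {
  mv : finType;
  me : finType;
  mends : me -> {set mv};
  mends2 : forall e, #|mends e| = 2
}.

Definition pb (P : Prop) : bool :=
  if excluded_middle_informative P then true else false.

Lemma pbP (P : Prop) : reflect P (pb P).
Proof. rewrite /pb; case: excluded_middle_informative => h; by constructor. Qed.

Definition is_copy (G F0 : multigraph) (S : {set me G})
    (phi : mv F0 -> mv G) (psi : me F0 -> me G) : Prop :=
  injective phi /\ injective psi /\ (forall f, psi f \in S) /\
  (forall f, mends (psi f) = phi @: mends f).

Definition in_copy (G : multigraph) (Fam : multigraph -> Prop)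
    (S : {set me G}) (x : me G) : Prop :=
  exists F0 : multigraph, Fam F0 /\
  exists (phi : mv F0 -> mv G) (psi : me F0 -> me G),
    is_copy S phi psi /\ x \in [set psi f | f in [set: me F0]].

Definition weakly_sat (G : multigraph) (Fam : multigraph -> Prop)
    (H : {set me G}) : Prop :=
  exists s : seq (me G),
    uniq s /\ (forall x, (x \in s) = (x \notin H)) /\
    forall (i : nat) (x0 : me G), i < size s ->
      in_copy Fam (H :|: [set x in take i.+1 s]) (nth x0 s i).

Lemma weakly_sat_full (G : multigraph) (Fam : multigraph -> Prop) :
  weakly_sat Fam [set: me G].
Proof.
exists [::]; split => //; split => [x|i x0 //].
by rewrite in_setT.
Qed.

Lemma wsat_ex (G : multigraph) (Fam : multigraph -> Prop) :
  exists n, pb (exists H : {set me G}, weakly_sat Fam H /\ #|H| = n).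
Proof.
exists #|[set: me G]|; apply/pbP; exists [set: me G]; split => //.
exact: weakly_sat_full.
Qed.

Definition wsat (G : multigraph) (Fam : multigraph -> Prop) : nat :=
  ex_minn (wsat_ex G Fam).

Definition is_matroid_rank (E : finType) (rk : {set E} -> nat) : Prop :=
  [/\ forall A : {set E}, rk A <= #|A|,
      forall A B : {set E}, A \subset B -> rk A <= rk B &
      forall A B : {set E}, rk (A :|: B) + rk (A :&: B) <= rk A + rk B].

Definition is_cycle (E : finType) (rk : {set E} -> nat) (C : {set E}) : Prop :=
  forall e, e \in C -> rk (C :\ e) = rk C.

Definition weakly_sat_matroid (G : multigraph) (Fam : multigraph -> Prop)
    (rk : {set me G} -> nat) : Prop :=
  is_matroid_rank rk /\
  forall F0 : multigraph, Fam F0 ->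
  forall (phi : mv F0 -> mv G) (psi : me F0 -> me G),
    is_copy [set: me G] phi psi ->
    is_cycle rk [set psi f | f in [set: me F0]].

Definition rksat_pred (G : multigraph) (Fam : multigraph -> Prop) : pred nat :=
  fun n => pb (exists rk : {set me G} -> nat,
                 weakly_sat_matroid Fam rk /\ rk [set: me G] = n).

Lemma rksat_ex (G : multigraph) (Fam : multigraph -> Prop) :
  exists n, rksat_pred G Fam n.
Proof.
exists 0; apply/pbP; exists (fun _ => 0); split; last by [].
split; first by split => *; rewrite ?leq0n.
by move=> F0 _ phi psi _ e _.
Qed.

Lemma rksat_bound (G : multigraph) (Fam : multigraph -> Prop) :
  forall n, rksat_pred G Fam n -> n <= #|[set: me G]|.
Proof.
move=> n /pbP [rk [[[h1 _ _] _] <-]]; exact: h1.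
Qed.

Definition rksat (G : multigraph) (Fam : multigraph -> Prop) : nat :=
  ex_maxn (rksat_ex G Fam) (rksat_bound (Fam := Fam)).

From mathcomp Require Import all_boot.

(* Adding an edge instance x that lies in a copy of a member of Fam inside
   the current edge set S cannot raise the rank of a weakly Fam-saturated
   matroid, because the copy is a cycle through x and submodularity puts x
   in the closure of S \ x. Along the saturation process starting from H the
   rank therefore never exceeds rk H <= |H|, and the process ends at E(G). *)

Section MatroidRank.

Context {E : finType} {rk : {set E} -> nat}.
Hypothesis rk_mono : forall A B : {set E}, A \subset B -> rk A <= rk B.
Hypothesis rk_submod :
  forall A B : {set E}, rk (A :|: B) + rk (A :&: B) <= rk A + rk B.

Lemma cycle_rank_setD1 {C S : {set E}} {x : E} :
  is_cycle rk C -> C \subset S -> x \in C -> rk S <= rk (S :\ x).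
Proof.
move=> C_cycle CS xC.
have SxUC : (S :\ x) :|: C = S.
  apply/eqP; rewrite eqEsubset subUset subD1set CS andbT.
  by apply/subsetP => y yS; rewrite !inE yS andbT; case: eqP => // ->.
have SxIC : (S :\ x) :&: C = C :\ x by rewrite setIC setIDA (setIidPl CS).
have := rk_submod (S :\ x) C.
by rewrite SxUC SxIC (C_cycle x xC) leq_add2r.
Qed.

Lemma take_nth_setD1_subset (H : {set E}) (s : seq E) (i : nat) (x0 : E) :
  i < size s ->
  (H :|: [set y in take i.+1 s]) :\ nth x0 s i \subset H :|: [set y in take i s].
Proof.
move=> lt_i_s; apply/subsetP => y.
by rewrite !inE (take_nth x0 lt_i_s) -cats1 mem_cat inE; case: eqP; rewrite ?orbF.
Qed.

Lemma rank_setU_seq_le {H : {set E}} {s : seq E} :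
    (forall (i : nat) (x0 : E), i < size s ->
       rk (H :|: [set y in take i.+1 s])
         <= rk ((H :|: [set y in take i.+1 s]) :\ nth x0 s i)) ->
  rk (H :|: [set y in s]) <= rk H.
Proof.
move=> rk_step; rewrite -(take_size s).
elim: {-2}(size s) (leqnn (size s)) => [|i IH] le_i_s.
  by rewrite take0 (_ : [set y in [::]] = set0) ?setU0 //; apply/setP => y; rewrite !inE.
case: s rk_step le_i_s IH => [//|x0 s'] rk_step lt_i_s IH.
apply: leq_trans (IH (ltnW lt_i_s)).
apply: leq_trans (rk_step i x0 lt_i_s) _.
exact/rk_mono/take_nth_setD1_subset.
Qed.

End MatroidRank.

Lemma is_copy_setT {G F0 : multigraph} {S : {set me G}}
    {phi : mv F0 -> mv G} {psi : me F0 -> me G} :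
  is_copy S phi psi -> is_copy [set: me G] phi psi.
Proof. by move=> [phi_inj [psi_inj [_ psi_ends]]]; do 3 (split => //). Qed.

Section SaturationRank.

Context {G : multigraph} {Fam : multigraph -> Prop} {rk : {set me G} -> nat}.
Hypothesis rk_sat : weakly_sat_matroid Fam rk.

Lemma in_copy_rank_setD1 {S : {set me G}} {x : me G} :
  in_copy Fam S x -> rk S <= rk (S :\ x).
Proof.
have [[_ _ rk_submod] copy_cycle] := rk_sat.
move=> [F0 [FamF0 [phi [psi [copyS x_copy]]]]].
have copy_sub : [set psi f | f in [set: me F0]] \subset S.
  by apply/subsetP => y /imsetP [f _ ->]; case: copyS => [_ [_ [psiS _]]].
have copy_is_cycle := copy_cycle F0 FamF0 phi psi (is_copy_setT copyS).
exact: (cycle_rank_setD1 rk_submod copy_is_cycle copy_sub x_copy).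
Qed.

Lemma weakly_sat_rank_le {H : {set me G}} :
  weakly_sat Fam H -> rk [set: me G] <= rk H.
Proof.
move=> [s [_ [s_compl s_steps]]].
have [[_ rk_mono _] _] := rk_sat.
have -> : [set: me G] = H :|: [set y in s].
  by apply/setP => y; rewrite !inE s_compl; case: (y \in H).
apply: (rank_setU_seq_le rk_mono) => i x0 lt_i_s.
exact: in_copy_rank_setD1 (s_steps i x0 lt_i_s).
Qed.

End SaturationRank.

Theorem lemma2 (G : multigraph) (Fam : multigraph -> Prop) :
  wsat G Fam >= rksat G Fam.
Proof.
rewrite /wsat /rksat.
case: ex_minnP => _ /pbP [H [H_sat <-]] _.
case: ex_maxnP => _ /pbP [rk [rk_sat <-]] _.
have [[rk_le_card _ _] _] := rk_sat.
exact: leq_trans (weakly_sat_rank_le rk_sat H_sat) (rk_le_card H).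
Qed.
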